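(* For any positive integer $k$ and for $n\ge 3$, $\dim_{k,f}(C_n)=\frac{n}{n-1}$ if $n \le 2k+3$ and $n$ is odd; $\dim_{k,f}(C_n)=\frac{n}{n-2}$ if $n\le 2k+3$ and $n$ is even; and $\dim_{k,f}(C_n)=\frac{n}{2(k+1)}$ if $n\ge 2k+4$.
   Context: $C_n$ is the cycle on $n$ vertices. $d(x,y)$ is the distance in $G$. For a positive integer $k$, $d_k(x,y)=\min\{d(x,y),k+1\}$ and $R_k\{x,y\}=\{z\in V(G): d_k(x,z)\neq d_k(y,z)\}$. For a function $g$ on $V(G)$ and $U\subseteq V(G)$, $g(U)=\sum_{s\in U}g(s)$. A function $h:V(G)\to[0,1]$ is a $k$-truncated resolving function of $G$ if $h(R_k\{x,y\})\ge 1$ for all distinct $x,y\in V(G)$; $\dim_{k,f}(G)$ is the minimum of $h(V(G))$ over all such $h$. *)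

From mathcomp Require Import all_boot all_order all_algebra.
Set Implicit Arguments. Unset Strict Implicit. Unset Printing Implicit Defensive.
Import Order.TTheory GRing.Theory Num.Theory.

(* The cycle C_n has vertex set 'I_n, with i adjacent to i+1 mod n.
   Its graph distance is d(i,j) = min(|i-j|, n-|i-j|). *)
Definition absdiff (a b : nat) : nat := if a <= b then b - a else a - b.

Definition cycle_dist (n : nat) (x y : 'I_n) : nat :=
  minn (absdiff x y) (n - absdiff x y).

Definition tdist (n k : nat) (x y : 'I_n) : nat := minn (cycle_dist x y) k.+1.

Definition Rk (n k : nat) (x y : 'I_n) : {set 'I_n} :=
  [set z | tdist k x z != tdist k y z].

Local Open Scope ring_scope.

Definition trunc_resolving (R : realFieldType) (n k : nat) (h : 'I_n -> R) : Prop :=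
  (forall v, 0 <= h v <= 1) /\
  (forall x y : 'I_n, x != y -> 1 <= \sum_(z in Rk k x y) h z).

Definition dimkf_is (R : realFieldType) (n k : nat) (v : R) : Prop :=
  (exists h : 'I_n -> R, trunc_resolving k h /\ \sum_z h z = v) /\
  (forall h : 'I_n -> R, trunc_resolving k h -> v <= \sum_z h z).

From mathcomp Require Import all_boot all_order all_algebra zify.
Import Order.TTheory GRing.Theory Num.Theory.

(* Rotations of C_n preserve truncated distances, so each vertex lies in
   exactly #|R_k{0,a}| of the n sets R_k{i, a+i}; summing a resolving h over
   them gives n <= #|R_k{0,a}| * h(V).  Conversely the constant function 1/c
   is resolving when c is the least size of an R_k{x,y}, so
   dim_{k,f}(C_n) = n/c as soon as this minimum is attained at some {0,a}.
   A vertex outside R_k{0,b} is equidistant from 0 and b (there are at most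
   two such vertices, one if n is odd) or at distance > k from both.  For
   n <= 2k+3 truncation is void, so c = n-1 or n-2 according to the parity of
   n, attained at a = 1 or a = 2.  For n >= 2k+4, reflecting b if necessary,
   the arc from 0 through 1 to b is the longer one: either it has length
   >= 2k+1 and the k+1 vertices of it nearest to each end lie in R_k{0,b}, or
   every vertex is within k of 0 or b.  Either way #|R_k{0,b}| >= 2k+2, with
   equality for b = 1. *)

Lemma card_le_vals {m} {A : {set 'I_m}} (s : seq nat) :
  {subset [seq val z | z in A] <= s} -> #|A| <= size s.
Proof.
move=> sub; rewrite cardE -(size_map val); apply: uniq_leq_size => //.
by rewrite map_inj_uniq ?enum_uniq //; apply: val_inj.
Qed.

Lemma card_ge_vals {m} {A : {set 'I_m}} (s : seq nat) :
  uniq s -> {subset s <= [seq val z | z in A]} -> size s <= #|A|.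
Proof. by move=> uniq_s sub; rewrite cardE -(size_map val); apply: uniq_leq_size. Qed.

Section CycleResolvingSets.

Context {n k : nat}.
Local Notation N := n.+1.
Implicit Types x y z a b : 'I_N.

Lemma val_ZpD x y : (x + y)%R = (if x + y < N then x + y else x + y - N) :> nat.
Proof.
rewrite /=; case: ltnP => [/modn_small //| le_N_xy].
have lt_xy_2N : x + y - N < N by have := ltn_ord x; have := ltn_ord y; lia.
by rewrite -{1}(subnK le_N_xy) modnDr modn_small.
Qed.

Lemma val_ZpN b : b != 0%R -> (- b)%R = N - b :> nat.
Proof.
move=> b_neq0; rewrite /= modn_small //.
by have := ltn_ord b; move: b_neq0; rewrite -val_eqE /=; lia.
Qed.

Lemma cycle_distE x z : cycle_dist x z = minn (x - z + (z - x)) (N - (x - z + (z - x))).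
Proof. by rewrite /cycle_dist /absdiff; case: leqP => ?; congr minn; lia. Qed.

Lemma tdistD x z s : tdist k (x + s)%R (z + s)%R = tdist k x z.
Proof.
rewrite /tdist !cycle_distE !val_ZpD.
have := ltn_ord x; have := ltn_ord z; have := ltn_ord s.
by do 2 case: ifP => ?; lia.
Qed.

Lemma Rk_sym x y : Rk k x y = Rk k y x.
Proof. by apply/setP => z; rewrite !inE eq_sym. Qed.

Lemma mem_Rk_l x y : x != y -> x \in Rk k x y.
Proof.
rewrite -val_eqE inE /tdist !cycle_distE /=.
by have := ltn_ord x; have := ltn_ord y; lia.
Qed.

Lemma card_Rk_sub x y : #|Rk k x y| = #|Rk k 0%R (y - x)%R|.
Proof.
rewrite -(card_preimset _ (addIr x)); apply: eq_card => z.
by rewrite !inE -!(tdistD _ z x) add0r subrK.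
Qed.

Lemma card_Rk_opp b : #|Rk k 0%R (- b)%R| = #|Rk k 0%R b|.
Proof. by rewrite -sub0r -card_Rk_sub Rk_sym card_Rk_sub subr0. Qed.

Lemma sum_Rk_shift (R : realFieldType) (h : 'I_N -> R) a :
  (\sum_i \sum_(z in Rk k i (a + i)%R) h z = #|Rk k 0%R a|%:R * \sum_z h z)%R.
Proof.
under eq_bigr => i _ do rewrite big_mkcond.
rewrite exchange_big mulr_sumr; apply: eq_bigr => z _.
have sub_inj : injective (fun i => z - i)%R by move=> i j /addrI /oppr_inj.
rewrite -big_mkcond (eq_bigl [in (fun i => z - i)%R @^-1: Rk k 0%R a]) => [|i].
  by rewrite sumr_const card_preimset // mulr_natl.
by rewrite !inE -!(tdistD _ (z - i)%R i) add0r subrK.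
Qed.

Lemma dimkf_is_cycle {R : realFieldType} a c : a != 0%R ->
  (forall b, b != 0%R -> c <= #|Rk k 0%R b|) -> #|Rk k 0%R a| <= c ->
  @dimkf_is R N k (N%:R / c%:R)%R.
Proof.
move=> a_neq0 min_c le_a_c.
have card_a : #|Rk k 0%R a| = c by apply/eqP; rewrite eqn_leq le_a_c min_c.
have c_gt0 : 0 < c.
  by rewrite -card_a card_gt0; apply/set0Pn; exists 0%R; rewrite mem_Rk_l // eq_sym.
have cR_gt0 : (0 < c%:R :> R)%R by rewrite ltr0n.
split.
- exists (fun=> c%:R^-1)%R; split; last first.
    by rewrite sumr_const cardT size_enum_ord -[(_ *+ N)%R]mulr_natl.
  split=> [v|x y x_neq_y]; first by rewrite invr_ge0 ler0n /= invf_le1 // ler1n.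
  rewrite sumr_const -[(_ *+ #|_|)%R]mulr_natl ler_pdivlMr // mul1r ler_nat card_Rk_sub.
  by apply: min_c; rewrite subr_eq0 eq_sym.
- move=> h [_ h_res]; rewrite ler_pdivrMr // mulrC -card_a -sum_Rk_shift.
  have -> : (N%:R = \sum_(i : 'I_N) 1 :> R)%R by rewrite sumr_const card_ord.
  apply: ler_sum => i _; apply: h_res.
  by rewrite -{1}(add0r i) (inj_eq (addIr i)) eq_sym.
Qed.

Definition equidistant b : {set 'I_N} := [set z | cycle_dist 0%R z == cycle_dist b z].

Lemma card_equidistant_le b : b != 0%R -> #|equidistant b| <= 2 - odd N.
Proof.
move=> b_neq0.
(* 2z is b or b + n, and only one of these is even when n is odd. *)
pose s := if odd N then [:: (b + odd b * N)./2] else [:: b./2; (b + N)./2].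
apply: leq_trans (card_le_vals s _) _; last by rewrite /s; case: ifP.
move=> j /imageP [z]; rewrite inE !cycle_distE /= => /eqP dist_eq ->.
move: b_neq0; rewrite -val_eqE /s /=; have := ltn_ord z; have := ltn_ord b.
by case: ifP => odd_N; rewrite !inE; lia.
Qed.

Lemma card_Rk_le_equidistant b : #|Rk k 0%R b| <= N - #|equidistant b|.
Proof.
rewrite cardsCs card_ord leq_sub2l // subset_leq_card //.
by apply/subsetP => z; rewrite !inE /tdist negbK => /eqP ->.
Qed.

Lemma card_Rk_ge_equidistant b : b != 0%R -> ~: Rk k 0%R b \subset equidistant b ->
  N - (2 - odd N) <= #|Rk k 0%R b|.
Proof.
move=> b_neq0 /subset_leq_card le_compl; rewrite cardsCs card_ord.
by have := card_equidistant_le b b_neq0; lia.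
Qed.

Lemma tdist_small x z : N <= 2 * k + 3 -> tdist k x z = cycle_dist x z.
Proof. by rewrite /tdist cycle_distE; have := ltn_ord x; have := ltn_ord z; lia. Qed.

Lemma card_Rk_small b : N <= 2 * k + 3 -> b != 0%R -> N - (2 - odd N) <= #|Rk k 0%R b|.
Proof.
move=> small b_neq0; apply: card_Rk_ge_equidistant => //.
by apply/subsetP => z; rewrite !inE !tdist_small // negbK.
Qed.

Lemma card_Rk_far b : 2 * k + 1 <= b -> 2 * k.+1 <= #|Rk k 0%R b|.
Proof.
move=> far; have lt_b_N := ltn_ord b.
apply: leq_trans (card_ge_vals (iota 0 k.+1 ++ iota (b - k) k.+1) _ _).
- by rewrite size_cat !size_iota; lia.
- by rewrite cat_uniq !iota_uniq andbT andTb; apply/hasPn => j; rewrite !mem_iota; lia.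
move=> j; rewrite mem_cat !mem_iota => j_near; apply/imageP; exists (inord j).
  by rewrite inE /tdist !cycle_distE inordK /=; lia.
by rewrite /= inordK; lia.
Qed.

Lemma card_Rk_near b : b != 0%R -> b <= 2 * k -> N - b <= 2 * k -> N - 2 <= #|Rk k 0%R b|.
Proof.
move=> b_neq0 le_b le_Nb; apply: leq_trans (card_Rk_ge_equidistant b b_neq0 _); first lia.
apply/subsetP => z; rewrite !inE negbK /tdist !cycle_distE /=.
by have := ltn_ord z; lia.
Qed.

Lemma card_Rk_large b : 2 * k + 4 <= N -> b != 0%R -> 2 * k.+1 <= #|Rk k 0%R b|.
Proof.
move=> large; wlog le_N_2b : b / N <= 2 * b => [wlog_b b_neq0 | b_neq0].
  case: (leqP N (2 * b)) => [le_N_2b|lt_2b_N]; first exact: wlog_b.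
  rewrite -card_Rk_opp; apply: wlog_b; last by rewrite oppr_eq0.
  by rewrite val_ZpN //; lia.
case: (leqP (2 * k + 1) b) => [/card_Rk_far //|lt_b].
by apply: leq_trans (card_Rk_near b b_neq0 _ _); have := ltn_ord b; lia.
Qed.

Lemma card_Rk_one : 1 < N -> #|Rk k 0%R (inord 1 : 'I_N)| <= 2 * k.+1.
Proof.
move=> N_gt1; apply: leq_trans (card_le_vals (iota 0 k.+2 ++ iota (N - k) k) _) _.
  move=> j /imageP [z]; rewrite mem_cat !mem_iota inE /tdist !cycle_distE inordK //=.
  by move=> resolves ->; have := ltn_ord z; lia.
by rewrite size_cat !size_iota; lia.
Qed.

Lemma card_equidistant_odd : odd N -> 1 < N -> 1 <= #|equidistant (inord 1)|.
Proof.
move=> odd_N N_gt1; apply: (card_ge_vals [:: N./2.+1]) => // j.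
rewrite inE => /eqP ->; apply/imageP; exists (inord N./2.+1);
  by rewrite ?inE ?cycle_distE /= ?inordK; lia.
Qed.

Lemma card_equidistant_even : ~~ odd N -> 2 < N -> 2 <= #|equidistant (inord 2)|.
Proof.
move=> even_N N_gt2; apply: (card_ge_vals [:: 1; N./2.+1]); first by rewrite /= inE; lia.
move=> j; rewrite !inE => /orP[] /eqP ->; apply/imageP;
  [exists (inord 1) | exists (inord N./2.+1)];
  by rewrite ?inE ?cycle_distE /= ?inordK; lia.
Qed.

End CycleResolvingSets.

Theorem theorem3p4 (R : realFieldType) (k n : nat) :
  (0 < k)%N -> (3 <= n)%N ->
  [/\ ((n <= 2 * k + 3)%N -> odd n -> @dimkf_is R n k (n%:R / (n - 1)%:R)),
      ((n <= 2 * k + 3)%N -> ~~ odd n -> @dimkf_is R n k (n%:R / (n - 2)%:R)) &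
      ((2 * k + 4 <= n)%N -> @dimkf_is R n k (n%:R / (2 * (k + 1))%:R))].
Proof.
(* The formula holds for k = 0 as well. *)
move=> _; case: n => [//|n] n_ge3.
have inord_neq0 j : 0 < j -> j < n.+1 -> inord j != 0%R :> 'I_n.+1.
  by move=> j_gt0 j_lt; rewrite -val_eqE /= inordK // -lt0n.
split=> [small odd_n | small even_n | large].
- apply: (dimkf_is_cycle (inord 1)); first by apply: inord_neq0; lia.
    by move=> b /(card_Rk_small b small); rewrite odd_n.
  apply: leq_trans (card_Rk_le_equidistant _) _.
  by apply/leq_sub2l/card_equidistant_odd => //; lia.
- apply: (dimkf_is_cycle (inord 2)); first by apply: inord_neq0; lia.
    by move=> b /(card_Rk_small b small); rewrite (negbTE even_n).
  apply: leq_trans (card_Rk_le_equidistant _) _.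
  by apply/leq_sub2l/card_equidistant_even => //; lia.
- rewrite addn1; apply: (dimkf_is_cycle (inord 1)); first by apply: inord_neq0; lia.
    by move=> b; apply: card_Rk_large.
  by apply: card_Rk_one; lia.
Qed.
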